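(* For every integer $n\ge 1$, let $M_F(n)$ denote the maximum modulus of an independence root over all forests on $n$ vertices. Then $$M_F(n)\le \begin{cases} 2^{\frac{n-1}{2}}+\frac{n-1}{2} & \text{if } n \text{ is odd},\\ 2^{\frac{n-2}{2}}+\frac{n}{2} & \text{if } n \text{ is even}.\end{cases}$$
   Context: For a finite simple graph $G$, the independence polynomial is $i(G,x)=\sum_{k=0}^{\alpha(G)} i_k x^k$, where $i_k$ is the number of independent sets of size $k$ in $G$ (with $i_0=1$) and $\alpha(G)$ is the independence number. Its complex roots are the independence roots of $G$. A forest is an acyclic graph. *)

From HB Require Import structures.
From mathcomp Require Import all_boot all_order all_algebra.
From mathcomp Require Import algC.
Set Implicit Arguments. Unset Strict Implicit. Unset Printing Implicit Defensive.
Import Order.TTheory GRing.Theory Num.Theory.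

Definition simple_graph (T : finType) (e : rel T) : Prop :=
  symmetric e /\ irreflexive e.

Definition forest (T : finType) (e : rel T) : Prop :=
  forall s : seq T, uniq s -> 3 <= size s -> ~~ cycle e s.

Definition independent (T : finType) (e : rel T) (S : {set T}) : bool :=
  [forall x in S, forall y in S, ~~ e x y].

Definition indep_count (T : finType) (e : rel T) (k : nat) : nat :=
  #|[set S : {set T} | independent e S & #|S| == k]|.

(* independence polynomial i(G,x) = sum_k i_k x^k (independent sets have
   size at most #|T|, so coefficients beyond #|T| vanish) *)
Definition indep_poly (R : nzRingType) (T : finType) (e : rel T) : {poly R} :=
  (\poly_(k < #|T|.+1) (indep_count e k)%:R)%R.

Local Open Scope ring_scope.

Definition forest_bound (n : nat) : algC :=
  if odd n then 2 ^+ n./2 + (n./2)%:R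
  else 2 ^+ (n.-2)./2 + (n./2)%:R.

From HB Require Import structures.
From mathcomp Require Import all_boot all_order all_algebra.
From mathcomp Require Import algC.
From mathcomp Require Import zify.
Set Implicit Arguments. Unset Strict Implicit. Unset Printing Implicit Defensive.
Import Order.TTheory GRing.Theory Num.Theory.

(* Write i_k(U) for the number of independent k-subsets of a vertex set U, and
   alpha(U) for its independence number. Deleting a vertex u gives
   i_{k+1}(U) = i_{k+1}(U - u) + i_k(U - N[u]). Every nonempty vertex set of a
   forest contains an isolated vertex or a pendant vertex v with neighbour u, so
   induction on |U| shows i_k(U) <= g(|U|) i_{k+1}(U) for all k < alpha(U), where
   g is the bound of the theorem: an isolated vertex costs 1 in the ratio, and in
   the pendant case deleting u leaves v isolated. The only delicate term is
   i_k(U - N[u]) when U - N[u] has no independent set of size k + 1; it is then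
   counting maximum independent sets of a forest on fewer than |U| - 2 vertices,
   of which there are at most 2^(m/2) on m vertices. Finally, a polynomial with
   nonnegative coefficients whose consecutive ratios a_k / a_{k+1} are at most rho
   has all its roots in the disc |z| <= rho (Enestrom-Kakeya). *)

Lemma exists_subset_card (T : finType) (A : {set T}) k :
  k <= #|A| -> exists2 B : {set T}, B \subset A & #|B| = k.
Proof.
move/card_geqP=> [s [s_uniq <- sA]].
exists [set x in s]; last by rewrite cardsE (card_uniqP s_uniq).
by apply/subsetP => x; rewrite inE => /sA.
Qed.

Section IndependentSets.
Variables (T : finType) (e : rel T).
Hypotheses (e_sym : symmetric e) (e_irr : irreflexive e).

Lemma independentP (S : {set T}) :
  reflect {in S &, forall x y, ~~ e x y} (independent e S).
Proof.
apply: (iffP forall_inP) => [indS x y xS yS | indS x xS].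
  by have /forall_inP := indS x xS; apply.
by apply/forall_inP => y; apply: indS.
Qed.

Lemma independentS (S S' : {set T}) :
  S' \subset S -> independent e S -> independent e S'.
Proof.
move=> /subsetP sS'S /independentP indS.
by apply/independentP => x y /sS'S xS /sS'S; apply: indS.
Qed.

Lemma independent_setU1 (S : {set T}) v :
  {in S, forall x, ~~ e v x} -> independent e S -> independent e (v |: S).
Proof.
move=> nev /independentP indS; apply/independentP => x y; rewrite !inE.
case/predU1P=> [->|xS] /predU1P[->|yS]; rewrite ?e_irr ?nev //.
  by rewrite e_sym nev.
exact: indS.
Qed.

Lemma independent0 : independent e set0.
Proof. by apply/independentP => x; rewrite inE. Qed.

Definition closed_nbhd (u : T) : {set T} := u |: [set x | e u x].

Definition indep_count_in (U : {set T}) k :=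
  #|[set S : {set T} | [&& S \subset U, independent e S & #|S| == k]]|.

Definition indep_num (U : {set T}) :=
  \max_(S : {set T} | (S \subset U) && independent e S) #|S|.

Lemma indep_numP (U : {set T}) k :
  reflect (exists2 S : {set T}, (S \subset U) && independent e S & k <= #|S|)
          (k <= indep_num U).
Proof.
apply: (iffP idP) => [|[S SU /leq_trans-> //]]; last exact: leq_bigmax_cond.
pose P := [pred S : {set T} | (S \subset U) && independent e S].
have [|S PS max_S] := eq_bigmax_cond (fun S : {set T} => #|S|) (_ : 0 < #|P|).
  by apply/card_gt0P; exists set0; rewrite inE sub0set independent0.
by rewrite /indep_num (_ : \max_(S | _) _ = #|S|) //; exists S.
Qed.

Lemma indep_num_subset (X Y : {set T}) : X \subset Y -> indep_num X <= indep_num Y.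
Proof.
move=> XY; apply/bigmax_leqP => S /andP[SX indS].
by apply: leq_bigmax_cond; rewrite (subset_trans SX XY).
Qed.

Lemma indep_num_card (U : {set T}) : indep_num U <= #|U|.
Proof. by apply/bigmax_leqP => S /andP[SU _]; apply: subset_leq_card. Qed.

Lemma indep_num_setD1 (U : {set T}) v : indep_num U <= (indep_num (U :\ v)).+1.
Proof.
apply/bigmax_leqP => S /andP[SU indS]; rewrite (cardsD1 v S) addnC -addn1 leq_add //.
  by apply: leq_bigmax_cond; rewrite setSD // (independentS (subD1set S v)).
by case: (v \in S).
Qed.

Lemma indep_num_isolated (U : {set T}) v : v \in U -> {in U, forall x, ~~ e v x} ->
  indep_num U = (indep_num (U :\ v)).+1.
Proof.
move=> vU isov; apply/eqP; rewrite eqn_leq indep_num_setD1 /=.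
have /indep_numP[S /andP[SUv indS] le_S] := leqnn (indep_num (U :\ v)).
have vS : v \notin S by apply/negP => /(subsetP SUv); rewrite !inE eqxx.
apply/indep_numP; exists (v |: S); last by rewrite cardsU1 vS.
rewrite subUset sub1set vU (subset_trans SUv (subD1set U v)) /=.
by apply: independent_setU1 => // x /(subsetP SUv)/setD1P[_ /isov].
Qed.

Lemma indep_count_in_gt0 (U : {set T}) k :
  (0 < indep_count_in U k) = (k <= indep_num U).
Proof.
apply/card_gt0P/indep_numP => [[S]|[S /andP[SU indS] /exists_subset_card[S' S'S cardS']]].
  by rewrite inE => /and3P[SU indS /eqP <-]; exists S; rewrite ?SU.
exists S'; rewrite inE (subset_trans S'S SU) (independentS S'S indS) cardS'.
by rewrite eqxx.
Qed.

Lemma indep_count_in_eq0 (U : {set T}) k : indep_num U < k -> indep_count_in U k = 0.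
Proof. by move=> ltUk; apply/eqP; rewrite -leqn0 leqNgt indep_count_in_gt0 -ltnNge. Qed.

Lemma indep_count_in0 (U : {set T}) : indep_count_in U 0 = 1.
Proof.
rewrite -(cards1 (set0 : {set T})); apply: eq_card => S.
rewrite !inE cards_eq0 andbC; case: eqP => [->|]; rewrite ?andbF //.
by rewrite sub0set independent0.
Qed.

Lemma indep_count_in_del (U : {set T}) u k : u \in U ->
  indep_count_in U k.+1 =
  indep_count_in (U :\ u) k.+1 + indep_count_in (U :\: closed_nbhd u) k.
Proof.
move=> uU; rewrite /indep_count_in.
set X := [set S : {set T} | [&& S \subset U, _ & _]].
rewrite -(cardID [set S : {set T} | u \in S] X) addnC.
congr (_ + _).
  apply: eq_card => S; rewrite !inE subsetD1.
  by case: (S \subset U); case: (u \in S); rewrite ?andbF.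
set C := [set S : {set T} | [&& S \subset U :\: closed_nbhd u, _ & _]].
have uC S : S \in C -> u \notin S.
  by rewrite inE => /andP[/subsetP SB _]; apply/negP => /SB; rewrite !inE eqxx.
have inj_uU : {in C &, injective (fun S : {set T} => u |: S)}.
  by move=> S1 S2 /uC uS1 /uC uS2 eqS; rewrite -(setU1K uS1) -(setU1K uS2) eqS.
rewrite -(card_in_imset inj_uU); apply: eq_card => S; rewrite !inE.
apply/andP/imsetP => [[/and3P[SU indS /eqP cardS] uS] | [S' S'C ->]].
  exists (S :\ u); last by rewrite setD1K.
  rewrite inE (independentS (subD1set S u) indS) (cardsD1 u S) uS in cardS *.
  move: cardS; rewrite add1n => -[->]; rewrite eqxx !andbT.
  apply/subsetP => x /setD1P[xu xS]; rewrite !inE negb_or xu (subsetP SU) //=.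
  by rewrite andbT; move/independentP: indS; apply.
have uS' := uC S' S'C; move: S'C; rewrite inE => /and3P[S'B indS' /eqP cardS'].
rewrite setU11 cardsU1 uS' cardS' eqxx andbT; split=> //.
rewrite subUset sub1set uU (subset_trans S'B (subsetDl U _)) /=.
apply: independent_setU1 => // x /(subsetP S'B).
by rewrite !inE negb_or => /andP[/andP[]].
Qed.

Lemma setD_closed_nbhd_isolated (U : {set T}) v : {in U, forall x, ~~ e v x} ->
  U :\: closed_nbhd v = U :\ v.
Proof.
move=> isov; apply/setP => x; rewrite !inE negb_or andbC.
by case xU: (x \in U); rewrite ?andbF // isov ?andbT.
Qed.

Definition indep_ratio_le (U : {set T}) F :=
  forall k, k < indep_num U -> indep_count_in U k <= F * indep_count_in U k.+1.

Lemma indep_ratio_leW (U : {set T}) F G :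
  F <= G -> indep_ratio_le U F -> indep_ratio_le U G.
Proof.
by move=> leFG ratio k /ratio /leq_trans; apply; rewrite leq_mul2r leFG orbT.
Qed.

Lemma indep_ratio_le_isolated (U : {set T}) v F :
  v \in U -> {in U, forall x, ~~ e v x} ->
  indep_ratio_le (U :\ v) F -> indep_ratio_le U F.+1.
Proof.
move=> vU isov ratio [|k] ltkU.
  by rewrite indep_count_in0 muln_gt0 indep_count_in_gt0.
rewrite !(indep_count_in_del _ vU) setD_closed_nbhd_isolated //.
have := ratio k; rewrite -ltnS -indep_num_isolated // => /(_ ltkU).
nia.
Qed.

Lemma indep_ratio_le_del (U : {set T}) u F G :
  let B := U :\: closed_nbhd u in
  u \in U -> indep_num U <= indep_num (U :\ u) -> F <= G ->
  indep_ratio_le (U :\ u) F -> indep_ratio_le B G ->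
  ((indep_num B).+1 < indep_num U -> F + indep_count_in B (indep_num B) <= G) ->
  indep_ratio_le U G.
Proof.
move=> B uU leUA leFG ratioA ratioB top [|k] ltkU.
  have := ratioA 0 (leq_trans ltkU leUA).
  rewrite !indep_count_in0 (indep_count_in_del _ uU).
  by move/leq_trans; apply; rewrite leq_mul // leq_addr.
rewrite !(indep_count_in_del _ uU) -/B.
set a := indep_count_in (U :\ u); set b := indep_count_in B.
have ratio_a : a k.+1 <= F * a k.+2 by apply: ratioA; apply: leq_trans leUA.
have ratio_b : b k + F * a k.+2 <= G * b k.+1 + G * a k.+2.
  have leFGa : F * a k.+2 <= G * a k.+2 by rewrite leq_mul2r leFG orbT.
  have [ltkB | leBk] := ltnP k (indep_num B); first by rewrite leq_add ?ratioB.
  have [eqBk | ltBk] := eqVneq (indep_num B) k; last first.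
    rewrite /b indep_count_in_eq0 ?ltn_neqAle ?ltBk // add0n.
    by rewrite (leq_trans leFGa) ?leq_addl.
  have a_gt0 : 0 < a k.+2 by rewrite indep_count_in_gt0 (leq_trans ltkU leUA).
  have := top; rewrite eqBk -/(b k) => /(_ ltkU); nia.
nia.
Qed.

Definition pendant (U : {set T}) v u : Prop :=
  [/\ v \in U, u \in U, e v u & {in U, forall w, e v w -> w = u}].

Section Pendant.
Variables (U : {set T}) (v u : T).
Hypothesis vu_pendant : pendant U v u.

Lemma pendant_neq : v != u.
Proof. by case: vu_pendant => _ _ evu _; apply: contraTneq evu => ->; rewrite e_irr. Qed.

Lemma pendant_in_setD1 : v \in U :\ u.
Proof. by case: vu_pendant => vU _ _ _; rewrite !inE pendant_neq. Qed.

Lemma pendant_isolated : {in U :\ u, forall x, ~~ e v x}.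
Proof.
case: vu_pendant => _ _ _ uniq_u x /setD1P[xu xU].
by apply: contra xu => /(uniq_u x xU) ->.
Qed.

Lemma pendant_card : #|U| = (#|(U :\ u) :\ v|).+2.
Proof.
case: vu_pendant => _ uU _ _.
by rewrite (cardsD1 u U) uU (cardsD1 v (U :\ u)) pendant_in_setD1.
Qed.

Lemma pendant_setD_closed_nbhd : U :\: closed_nbhd u \subset (U :\ u) :\ v.
Proof.
case: vu_pendant => _ _ evu _; apply/subsetP => x.
rewrite !inE negb_or => /andP[/andP[xu neux] ->]; rewrite xu !andbT.
by apply: contraNneq _ neux => ->; rewrite e_sym.
Qed.

Lemma pendant_indep_num : indep_num U <= indep_num (U :\ u).
Proof.
case: vu_pendant => vU uU evu _; apply/bigmax_leqP => S /andP[SU indS].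
have [uS | uS] := boolP (u \in S); last first.
  by apply: leq_bigmax_cond; rewrite subsetD1 SU uS.
have vS : v \notin S.
  by apply: contraTN evu => vS; move/independentP: indS; apply.
apply/indep_numP; exists (v |: (S :\ u)); last first.
  by rewrite cardsU1 !inE negb_and vS orbT (cardsD1 u S) uS.
rewrite subUset sub1set pendant_in_setD1 setSD //=.
apply: independent_setU1; last exact: independentS (subD1set S u) indS.
by move=> x /setD1P[xu /(subsetP SU) xU]; apply: pendant_isolated; rewrite !inE xu.
Qed.

End Pendant.

End IndependentSets.

(* The value 0 at 0 (instead of 1) keeps the bound strictly increasing. *)
Definition forest_boundn (N : nat) : nat :=
  if N is 0 then 0 else
  if odd N then 2 ^ N./2 + N./2 else 2 ^ (N.-2)./2 + N./2.

Lemma forest_boundn_odd m : forest_boundn m.*2.+1 = 2 ^ m + m.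
Proof. by rewrite /forest_boundn /= odd_double /= uphalf_double. Qed.

Lemma forest_boundn_even m : forest_boundn m.*2.+2 = 2 ^ m + m.+1.
Proof. by rewrite /forest_boundn /= odd_double /= half_double. Qed.

Lemma forest_boundn_ltS N : forest_boundn N < forest_boundn N.+1.
Proof.
case: N => // N; rewrite -[N]odd_double_half; case: (odd N); move: N./2 => m.
  by rewrite add1n forest_boundn_even (forest_boundn_odd m.+1) expnS; lia.
by rewrite add0n forest_boundn_odd forest_boundn_even; lia.
Qed.

Lemma forest_boundn_homo : {homo forest_boundn : M N / M < N}.
Proof. exact: homo_ltn ltn_trans forest_boundn_ltS. Qed.

Lemma forest_boundnSS N : forest_boundn N.+3 = (forest_boundn N.+1).+1 + 2 ^ N./2.
Proof.
rewrite -[N]odd_double_half half_bit_double; case: (odd N); move: N./2 => m.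
  by rewrite add1n (forest_boundn_even m.+1) forest_boundn_even expnS; lia.
by rewrite add0n (forest_boundn_odd m.+1) forest_boundn_odd expnS; lia.
Qed.

Lemma forest_boundn_pendant M N :
  M < N -> (forest_boundn N).+1 + 2 ^ M./2 <= forest_boundn N.+2.
Proof.
case: N => // N ltMN.
by rewrite forest_boundnSS leq_add2l leq_pexp2l // half_leq.
Qed.

Section Forests.
Variables (T : finType) (e : rel T).
Hypotheses (e_sym : symmetric e) (e_irr : irreflexive e) (e_forest : forest e).

Lemma forest_path_nonadj (y p : T) r w :
  uniq [:: y, p & r] -> path e y (p :: r) -> w \in r -> ~~ e w y.
Proof.
move=> uniq_s path_s wr; apply/negP => ewy.
have ltwr : index w r < size r by rewrite index_mem.
have size3 : 3 <= size (take (index w r).+3 [:: y, p & r]).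
  by rewrite size_take /=; case: ifP; lia.
move/negP: (e_forest (take_uniq _ uniq_s) size3); apply.
move: path_s => /= /andP[-> path_pr] /=.
rewrite rcons_path (take_path (index w r).+1 path_pr) /= (take_nth y ltwr).
by rewrite last_rcons nth_index.
Qed.

Lemma forest_low_degree (U : {set T}) : U != set0 ->
  exists2 v, v \in U & {in U &, forall w w', e v w -> e v w' -> w = w'}.
Proof.
move=> /set0Pn[x0 x0U].
pose low v := [forall w in U, forall w' in U, e v w ==> e v w' ==> (w == w')].
case: (pickP [pred v in U | low v]) => [v /andP[vU /forall_inP lowv] | high].
  exists v => // w w' wU w'U evw evw'.
  by apply/eqP; move: (lowv w wU) => /forall_inP/(_ w' w'U); rewrite evw evw'.
have other v p : v \in U -> exists2 w, w \in U & e v w && (w != p).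
  move=> vU; apply/exists_inP; apply: contraFT (high v) => /exists_inPn far.
  rewrite /= vU; apply/forall_inP => w wU; apply/forall_inP => w' w'U.
  apply/implyP => evw; apply/implyP => evw'.
  by move: (far w wU) (far w' w'U); rewrite evw evw' !negbK => /eqP-> /eqP->.
have long n : exists y p r, [/\ uniq [:: y, p & r], path e y (p :: r),
    y \in U, p \in U & n <= size r].
  elim: n => [|n [y [p [r [uniq_s path_s yU pU len_r]]]]].
    have [y yU /andP[ex0y _]] := other x0 x0 x0U.
    exists y, x0, [::]; split=> //=; last by rewrite e_sym ex0y.
    by rewrite inE andbT; apply: contraTneq ex0y => ->; rewrite e_irr.
  have [w wU /andP[eyw wp]] := other y p yU.
  exists w, y, (p :: r); split=> //=; last by rewrite e_sym eyw.
  apply/andP; split=> //; rewrite !inE !negb_or wp /=; apply/andP; split.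
    by apply: contraTneq eyw => ->; rewrite e_irr.
  by apply: contraTN eyw => /(forest_path_nonadj uniq_s path_s); rewrite e_sym.
have [y [p [r [uniq_s _ _ _ len_r]]]] := long #|T|.
by have := max_card (mem [:: y, p & r]); rewrite (card_uniqP uniq_s) /= ltnNge ltnW.
Qed.

Lemma forest_isolated_or_pendant (U : {set T}) : U != set0 ->
  (exists2 v, v \in U & {in U, forall x, ~~ e v x}) \/ (exists v u, pendant e U v u).
Proof.
move=> /forest_low_degree[v vU low].
have [/exists_inP[u uU evu] | /exists_inPn isov] := boolP [exists u in U, e v u].
  by right; exists v, u; split=> // w wU evw; apply: low.
by left; exists v.
Qed.

Lemma max_indep_count_le (W : {set T}) k :
  indep_num e W <= k -> indep_count_in e W k <= 2 ^ #|W|./2.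
Proof.
have [n] := ubnP #|W|; elim: n => // n IHn in W k *; rewrite ltnS => leWn leWk.
case: k leWk => [|k] leWk; first by rewrite indep_count_in0 expn_gt0.
have [-> | W_nz] := eqVneq W set0.
  by rewrite indep_count_in_eq0 // (leq_ltn_trans (indep_num_card _ _)) ?cards0.
have IHW (X : {set T}) j :
    #|X| < #|W| -> indep_num e X <= j -> indep_count_in e X j <= 2 ^ #|X|./2.
  by move=> ltXW; apply: IHn; apply: leq_trans ltXW leWn.
case: (forest_isolated_or_pendant W_nz) => [[v vU isov] | [v [u vu_pendant]]].
  rewrite (indep_count_in_del e_sym e_irr _ vU) setD_closed_nbhd_isolated //.
  move: leWk; rewrite (indep_num_isolated e_sym e_irr vU isov) ltnS => leWk.
  have ltWvW : #|W :\ v| < #|W| by rewrite (cardsD1 v W) vU.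
  rewrite indep_count_in_eq0 // add0n (leq_trans (IHW _ _ ltWvW leWk)) //.
  by rewrite leq_pexp2l // half_leq // ltnW.
set A := (W :\ u) :\ v; set B := W :\: closed_nbhd e u.
have [vA isoA] := (pendant_in_setD1 e_irr vu_pendant, pendant_isolated vu_pendant).
have BA : B \subset A := pendant_setD_closed_nbhd e_sym vu_pendant.
have cardW : #|W| = #|A|.+2 := pendant_card e_irr vu_pendant.
have leAk : indep_num e A <= k.
  rewrite -ltnS -(indep_num_isolated e_sym e_irr vA isoA).
  exact: leq_trans (indep_num_subset _ (subD1set W u)) leWk.
have [vW uW _ _] := vu_pendant.
rewrite (indep_count_in_del e_sym e_irr _ uW) -/B.
rewrite (indep_count_in_del e_sym e_irr _ vA) -/A.
rewrite setD_closed_nbhd_isolated // -/A (indep_count_in_eq0 (leq_ltn_trans leAk _)) //.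
have countA : indep_count_in e A k <= 2 ^ #|A|./2 by apply: IHW; rewrite ?cardW.
have countB : indep_count_in e B k <= 2 ^ #|B|./2.
  apply: IHW; last exact: leq_trans (indep_num_subset _ BA) leAk.
  by rewrite cardW ltnS (leq_trans (subset_leq_card BA)).
have leBA : 2 ^ #|B|./2 <= 2 ^ #|A|./2 by rewrite leq_pexp2l ?half_leq ?subset_leq_card.
by rewrite cardW /= expnS add0n mul2n -addnn leq_add // (leq_trans countB).
Qed.

Lemma forest_indep_ratio_le (U : {set T}) : indep_ratio_le e U (forest_boundn #|U|).
Proof.
have [n] := ubnP #|U|; elim: n => // n IHn in U *; rewrite ltnS => leUn.
have IHU (X : {set T}) : #|X| < #|U| -> indep_ratio_le e X (forest_boundn #|X|).
  by move=> ltXU; apply: IHn; apply: leq_trans ltXU leUn.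
have [-> | U_nz] := eqVneq U set0.
  by move=> k /leq_trans/(_ (indep_num_card e _)); rewrite cards0.
case: (forest_isolated_or_pendant U_nz) => [[v vU isov] | [v [u vu_pendant]]].
  have cardU : #|U| = #|U :\ v|.+1 by rewrite (cardsD1 v U) vU.
  apply: indep_ratio_leW (indep_ratio_le_isolated e_sym e_irr vU isov (IHU _ _)).
    by rewrite cardU; apply: forest_boundn_homo.
  by rewrite cardU.
set A := (U :\ u) :\ v; set B := U :\: closed_nbhd e u.
have [vU uU _ _] := vu_pendant.
have cardU : #|U| = #|A|.+2 := pendant_card e_irr vu_pendant.
have BA : B \subset A := pendant_setD_closed_nbhd e_sym vu_pendant.
have leBA : #|B| <= #|A| by rewrite subset_leq_card.
have leUA := pendant_indep_num e_sym e_irr vu_pendant.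
apply: (indep_ratio_le_del e_sym e_irr (F := (forest_boundn #|A|).+1) uU leUA).
- by rewrite cardU; apply: forest_boundn_homo.
- apply: (indep_ratio_le_isolated e_sym e_irr) (pendant_in_setD1 e_irr vu_pendant) _ _.
    exact: pendant_isolated.
  by apply: IHU; rewrite cardU.
- have ltBU : #|B| < #|U| by rewrite cardU ltnS leqW.
  apply: (indep_ratio_leW (F := forest_boundn #|B|)); last exact: IHU.
  exact/ltnW/forest_boundn_homo.
rewrite -/B => ltBU; have ltBA : #|B| < #|A|.
  rewrite ltn_neqAle leBA andbT; apply: contraTneq ltBU => eqBA.
  have -> : B = A by apply/eqP; rewrite eqEcard BA eqBA leqnn.
  by rewrite -leqNgt (leq_trans leUA) // indep_num_setD1.
rewrite cardU; apply: leq_trans (forest_boundn_pendant ltBA); rewrite leq_add2l.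
exact: max_indep_count_le.
Qed.

End Forests.

Local Open Scope ring_scope.

Section NonnegativePolynomials.
Variable R : numDomainType.

Lemma horner_gt0 (p : {poly R}) x :
  p != 0 -> (forall i, 0 <= p`_i) -> 0 < x -> 0 < p.[x].
Proof.
move=> p_nz p_ge0 x_gt0.
have size_p : size p = (size p).-1.+1 by rewrite prednK // size_poly_gt0.
rewrite horner_coef size_p big_ord_recr /= -lead_coefE ltr_wpDl //.
  by apply: sumr_ge0 => i _; rewrite mulr_ge0 ?exprn_ge0 // ltW.
by rewrite mulr_gt0 ?exprn_gt0 // lt_def lead_coef_eq0 p_nz lead_coefE p_ge0.
Qed.

Lemma root_horner_norm_le0 (q : {poly R}) z :
  (forall i, (i < (size q).-1)%N -> q`_i <= 0) -> 0 <= lead_coef q ->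
  root q z -> q.[`|z|] <= 0.
Proof.
move=> q_le0 lc_ge0 /eqP qz0; have [-> | q_nz] := eqVneq q 0; first by rewrite horner0.
set d := (size q).-1.
have hornerE x : q.[x] = \sum_(i < d) q`_i * x ^+ i + lead_coef q * x ^+ d.
  have size_q : size q = d.+1 by rewrite prednK // size_poly_gt0.
  by rewrite horner_coef size_q big_ord_recr lead_coefE.
move: qz0; rewrite !hornerE => /eqP; rewrite addr_eq0 => /eqP top.
rewrite -[X in X + _]opprK addrC subr_le0.
have -> : lead_coef q * `|z| ^+ d = `|lead_coef q * z ^+ d|.
  by rewrite normrM normrX ger0_norm.
rewrite -[lead_coef q * _]opprK -top normrN (le_trans (ler_norm_sum _ _ _)) //.
rewrite -sumrN; apply: ler_sum => i _.
by rewrite normrM normrX ler0_norm ?q_le0 // mulNr.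
Qed.

(* Multiplying by X - rho makes every coefficient but the leading one nonpositive. *)
Lemma enestrom_kakeya (p : {poly R}) (rho z : R) :
  p != 0 -> (forall i, 0 <= p`_i) -> 0 <= rho ->
  (forall i, (i < (size p).-1)%N -> p`_i <= rho * p`_i.+1) ->
  root p z -> `|z| <= rho.
Proof.
move=> p_nz p_ge0 rho_ge0 ratio pz.
rewrite real_leNgt ?ger0_real //; apply/negP => rho_lt_z.
set q := p * ('X - rho%:P).
have size_q : size q = (size p).+1.
  by rewrite size_Mmonic ?monicXsubC // size_XsubC addn2.
have q_le0 i : (i < (size q).-1)%N -> q`_i <= 0.
  rewrite size_q /= /q mulrBr coefB coefMX coefMC.
  case: i => [_|i lt_i]; first by rewrite sub0r oppr_le0 mulr_ge0.
  by rewrite subr_le0 mulrC ratio // ltn_predRL.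
have lc_q : 0 <= lead_coef q by rewrite lead_coef_Mmonic ?monicXsubC // lead_coefE.
have := root_horner_norm_le0 q_le0 lc_q (_ : root q z); rewrite rootM pz => /(_ isT).
rewrite hornerM hornerXsubC lt_geF // mulr_gt0 ?subr_gt0 // horner_gt0 //.
exact: le_lt_trans rho_lt_z.
Qed.

End NonnegativePolynomials.

Lemma coef_indep_poly (R : nzRingType) (T : finType) (e : rel T) k :
  (indep_poly R e)`_k = (indep_count_in e [set: T] k)%:R.
Proof.
rewrite coef_poly (_ : indep_count e k = indep_count_in e [set: T] k).
  case: ltnP => // ltTk; rewrite indep_count_in_eq0 //.
  by rewrite (leq_ltn_trans (indep_num_card e _)) ?cardsT.
by apply: eq_card => S; rewrite !inE subsetT.
Qed.

Lemma forest_bound_natr n : (0 < n)%N -> forest_bound n = (forest_boundn n)%:R.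
Proof. by case: n => // n _; rewrite /forest_bound /=; case: odd; rewrite natrD natrX. Qed.

Theorem theorem5 (n : nat) (T : finType) (e : rel T) (z : algC) :
  (0 < n)%N -> #|T| = n -> simple_graph e -> forest e ->
  root (indep_poly algC e) z ->
  `|z| <= forest_bound n.
Proof.
move=> n_gt0 cardT [e_sym e_irr] e_forest root_z.
set p := indep_poly algC e in root_z *.
have p_nz : p != 0.
  apply/eqP => p_eq0; have := coef_indep_poly algC e 0.
  by rewrite -/p p_eq0 coef0 indep_count_in0 => /eqP; rewrite eq_sym oner_eq0.
have top_le_num : ((size p).-1 <= indep_num e [set: T])%N.
  have : p`_(size p).-1 != 0 by rewrite -lead_coefE lead_coef_eq0.
  by rewrite coef_indep_poly pnatr_eq0 -lt0n indep_count_in_gt0.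
rewrite forest_bound_natr //; apply: enestrom_kakeya root_z => // [i | i lt_ip].
  by rewrite coef_indep_poly ler0n.
rewrite !coef_indep_poly -natrM ler_nat -cardT -cardsT.
exact: forest_indep_ratio_le (leq_trans lt_ip top_le_num).
Qed.
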